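(* Let $\mathbb{G}$ and $\mathbb{H}$ be finite loopless graphs that are not 3-colorable, let $e=\{g,g'\}$ be a critical edge of $\mathbb{G}$ and $f=\{h,h'\}$ a critical edge of $\mathbb{H}$. Let $\mathbb{N}$ be a finite loopless graph with four distinct vertices $x,x',y,y'$ such that $\{x,x'\}$ and $\{y,y'\}$ are non-edges, and with an edge $d$, such that: (N1) every homomorphism $c:\mathbb{N}\to\mathbb{K}_3$ satisfies exactly one of $c(x)\neq c(x')$ and $c(y)\neq c(y')$; (N2) every map $c:\{x,x',y,y'\}\to\mathbb{K}_3$ satisfying exactly one of $c(x)\neq c(x')$, $c(y)\ne c(y')$ extends to a homomorphism $\mathbb{N}\to\mathbb{K}_3$; (N3) every map $c:\{x,x',y,y'\}\to\mathbb{K}_3$ with $c(x)=c(x')$ and $c(y)=c(y')$ extends to a homomorphism $\mathbb{N}-d\to\mathbb{K}_3$. Let $\mathbb{W}=(\mathbb{G},e)\oplus(\mathbb{H},f)$ be the graph obtained from the disjoint union of $\mathbb{G}-e$, $\mathbb{H}-f$ and $\mathbb{N}$ by identifying $g$ with $x$, $g'$ with $x'$, $h$ with $y$, and $h'$ with $y'$. Then: (1) $\mathbb{W}$ is not 3-colorable; (2) $d$ is a critical edge of $\mathbb{W}$; (3) $\Sigma_{\mathbb{W}}$ is implied by $\Sigma_{\mathbb{G}}$ and is implied by $\Sigma_{\mathbb{H}}$.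
   Context: A graph is a structure $(V,E)$ with a single symmetric binary relation $E$; $\mathbb{K}_3$ is the complete loopless graph on three vertices and a graph is 3-colorable if it admits a homomorphism to $\mathbb{K}_3$. For an edge $e$ of $\mathbb{M}$, $\mathbb{M}-e$ is the graph obtained by removing $e$; an edge $e$ of $\mathbb{M}$ is critical if $\mathbb{M}-e$ is 3-colorable. A clone on a set is a set of finitary operations containing all projections and closed under composition. A height 1 condition is a finite set of identities $f(x_{\pi(1)},\dots,x_{\pi(n)})\approx g(x_{\rho(1)},\dots,x_{\rho(m)})$ (function symbols, arbitrary maps $\pi,\rho$, universally quantified); a clone satisfies it if its symbols can be assigned functions of the clone of the right arities making all identities true; $\Sigma$ implies $\Sigma'$ if every clone satisfying $\Sigma$ satisfies $\Sigma'$. For a finite graph $\mathbb{G}=(V,E)$, $\Sigma_{\mathbb{G}}$ is the height 1 condition with a ternary symbol $f_v$ for each $v\in V$, a $6$-ary symbol $g_{(u,v)}$ for each $(u,v)\in E$, and, for each $(u,v)\in E$, the identities $f_u(x,y,z)\approx g_{(u,v)}(x,y,x,z,y,z)$ and $f_v(x,y,z)\approx g_{(u,v)}(y,x,z,x,z,y)$. *)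

From mathcomp Require Import all_boot.
Set Implicit Arguments. Unset Strict Implicit. Unset Printing Implicit Defensive.

Definition K3 : rel 'I_3 := fun i j => i != j.

Definition is_hom (V W : finType) (E : rel V) (F : rel W) (c : V -> W) : Prop :=
  forall u v, E u v -> F (c u) (c v).

Definition colorable3 (V : finType) (E : rel V) : Prop :=
  exists c : V -> 'I_3, is_hom E K3 c.

Definition remove_edge (V : finType) (E : rel V) (a b : V) : rel V :=
  fun u v => E u v && ~~ (((u == a) && (v == b)) || ((u == b) && (v == a))).

Definition critical_edge (V : finType) (E : rel V) (a b : V) : Prop :=
  E a b /\ colorable3 (remove_edge E a b).

Record clone (A : Type) := Clone {
  cmem : forall n : nat, (('I_n -> A) -> A) -> Prop;
  cproj : forall n (i : 'I_n), cmem (fun x => x i);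
  ccomp : forall n m (f : ('I_n -> A) -> A) (gs : 'I_n -> ('I_m -> A) -> A),
      cmem f -> (forall i, cmem (gs i)) -> cmem (fun x => f (fun i => gs i x))
}.

Arguments cmem {A} c n _.
Definition args {A : Type} (n : nat) (s : seq A) (d : A) : 'I_n -> A :=
  fun i => nth d s i.
Arguments args {A} n s d _.

Definition satSigma (V : finType) (E : rel V) (A : Type) (C : clone A) : Prop :=
  exists (f : V -> ('I_3 -> A) -> A) (g : V -> V -> ('I_6 -> A) -> A),
    (forall v, cmem C 3 (f v)) /\
    (forall u v, E u v -> cmem C 6 (g u v)) /\
    (forall u v, E u v -> forall x y z : A,
        f u (args 3 [:: x; y; z] x) = g u v (args 6 [:: x; y; x; z; y; z] x) /\
        f v (args 3 [:: x; y; z] x) = g u v (args 6 [:: y; x; z; x; z; y] x)).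

Definition h1_implies (S S' : forall A : Type, clone A -> Prop) : Prop :=
  forall (A : Type) (C : clone A), S A C -> S' A C.

Section Construction.
Variables (VG VH VN : finType) (EG : rel VG) (EH : rel VH) (EN : rel VN).
Variables (g g' : VG) (h h' : VH) (x x' y y' : VN).

Definition Nrest := {v : VN | v \notin [:: x; x'; y; y']}.

Definition Wvert : finType := (VG + VH + Nrest)%type.

Definition iG (u : VG) : Wvert := inl (inl u).
Definition iH (u : VH) : Wvert := inl (inr u).
Definition iN (v : VN) : Wvert :=
  match @insub VN (fun v => v \notin [:: x; x'; y; y']) Nrest v with
  | Some s => inr s
  | None => if v == x then iG g else if v == x' then iG g'
            else if v == y then iH h else iH h'
  end.

Definition Wadj : rel Wvert := fun u v =>
  [|| [exists a, [exists b, [&& remove_edge EG g g' a b, iG a == u & iG b == v]]],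
      [exists a, [exists b, [&& remove_edge EH h h' a b, iH a == u & iH b == v]]]
    | [exists a, [exists b, [&& EN a b, iN a == u & iN b == v]]]].

End Construction.
Arguments Wadj [VG VH VN] EG EH EN g g' h h' x x' y y' _ _.

From mathcomp Require Import all_boot.
From Stdlib Require Import FunctionalExtensionality IndefiniteDescription.
Set Implicit Arguments. Unset Strict Implicit. Unset Printing Implicit Defensive.

(* A 3-coloring of W restricts to colorings of N, G - e and H - f;
   by (N1) one of the pairs {g,g'}, {h,h'} gets distinct colors, so the
   coloring is already one of G or of H: contradiction.  Conversely, the
   colorings of G - e and H - f (constant on {g,g'}, resp. {h,h'}) glue with
   the coloring of N - d given by (N3) into a coloring of W - d.

   Sigma_E is rewritten in functional form: f_u(xs) is
   g_uv applied to xs o mu1 and f_v(xs) to xs o mu2, where mu1, mu2 : 6 -> 3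
   are the two projections of the six off-diagonal pairs of K3.  Every map
   kap : 6 -> 3 turns the 6-ary g_(g,g') into a ternary minor, and a family of
   such maps that is a homomorphism into the sixth power of K3 solves Sigma
   on its domain ([sigma_extend]).  For W, the G-part keeps the solution of
   Sigma_G, H - f is sent to constant maps by a coloring of H - f, and N is
   sent to the six colorings given by (N2) that realize (mu1 p, mu2 p) on
   (x, x').  The H-side statement follows by the symmetry that swaps the
   roles of G and H ([sigma_hom] along the swapping homomorphism). *)

(* The six off-diagonal pairs of K3 are (mu1 p, mu2 p), p : 'I_6, listed as
   (0,1) (1,0) (0,2) (2,0) (1,2) (2,1); [pos] is the inverse enumeration. *)
Definition mu1 (p : 'I_6) : 'I_3 := inord (nth 0 [:: 0; 1; 0; 2; 1; 2] p).
Definition mu2 (p : 'I_6) : 'I_3 := inord (nth 0 [:: 1; 0; 2; 0; 2; 1] p).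
Definition pos (a b : 'I_3) : 'I_6 :=
  inord (index (nat_of_ord a, nat_of_ord b)
               [:: (0, 1); (1, 0); (0, 2); (2, 0); (1, 2); (2, 1)]).

Lemma mu_pos (a b : 'I_3) : a != b -> mu1 (pos a b) = a /\ mu2 (pos a b) = b.
Proof.
case: a b => [[|[|[|a]]] Ha] [[|[|[|b]]] Hb] //= _;
  by split; apply/val_inj; rewrite /mu1 /mu2 /pos /= ?inordK.
Qed.

Lemma mu_neq (p : 'I_6) : mu1 p != mu2 p.
Proof. by case: p => -[|[|[|[|[|[|p]]]]]] Hp //; rewrite -val_eqE /= !inordK. Qed.

Lemma args3_eta (A : Type) (xs : 'I_3 -> A) :
  args 3 [:: xs (inord 0); xs (inord 1); xs (inord 2)] (xs (inord 0)) = xs.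
Proof.
apply: functional_extensionality => -[[|[|[|i]]] Hi] //=;
  by rewrite /args /=; congr xs; apply: val_inj; rewrite /= inordK.
Qed.

Lemma args6_mu1 (A : Type) (x y z : A) :
  args 6 [:: x; y; x; z; y; z] x = (fun p => args 3 [:: x; y; z] x (mu1 p)).
Proof.
apply: functional_extensionality => -[[|[|[|[|[|[|i]]]]]] Hi] //=;
  by rewrite /args /mu1 /= inordK.
Qed.

Lemma args6_mu2 (A : Type) (x y z : A) :
  args 6 [:: y; x; z; x; z; y] x = (fun p => args 3 [:: x; y; z] x (mu2 p)).
Proof.
apply: functional_extensionality => -[[|[|[|[|[|[|i]]]]]] Hi] //=;
  by rewrite /args /mu2 /= inordK.
Qed.

Definition sigma_fun (V : finType) (E : rel V) (A : Type) (C : clone A) : Prop :=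
  exists (f : V -> ('I_3 -> A) -> A) (g : V -> V -> ('I_6 -> A) -> A),
    [/\ (forall v, cmem C 3 (f v)),
        (forall u v, E u v -> cmem C 6 (g u v)) &
        (forall u v, E u v -> forall xs,
           f u xs = g u v (fun p => xs (mu1 p)) /\
           f v xs = g u v (fun p => xs (mu2 p)))].

Lemma satSigma_funP (V : finType) (E : rel V) (A : Type) (C : clone A) :
  satSigma E C <-> sigma_fun E C.
Proof.
split=> [[f [g [cf [cg fg]]]]|[f [g [cf cg fg]]]]; exists f, g.
  split=> // u v Euv xs; rewrite -(args3_eta xs).
  have [-> ->] := fg u v Euv (xs (inord 0)) (xs (inord 1)) (xs (inord 2)).
  by rewrite args6_mu1 args6_mu2.
do 2!split=> //; move=> u v Euv a b c.
by rewrite args6_mu1 args6_mu2; exact: fg.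
Qed.

Lemma cmem_minor (A : Type) (C : clone A) n m (op : ('I_n -> A) -> A)
  (k : 'I_n -> 'I_m) :
  cmem C n op -> cmem C m (fun xs => op (fun p => xs (k p))).
Proof. by move=> cop; apply: (ccomp cop) => p; exact: cproj. Qed.

Lemma sigma_hom (V V' : finType) (E : rel V) (E' : rel V') (phi : V' -> V)
  (A : Type) (C : clone A) :
  is_hom E' E phi -> satSigma E C -> satSigma E' C.
Proof.
move=> hphi /satSigma_funP [f [g [cf cg fg]]]; apply/satSigma_funP.
exists (fun v => f (phi v)), (fun u v => g (phi u) (phi v)).
by split=> [v|u v /hphi|u v /hphi]; [exact: cf|exact: cg|exact: fg].
Qed.

(* The map r identifies part
   of W with a copy of V; on the rest, and on the copies of the edge {a,a'},
   the vertices carry maps kap w : 'I_6 -> 'I_3 (with kap = mu1 on a and mu2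
   on a').  If every edge of W comes from an edge of E, or joins two such
   vertices whose maps differ at every coordinate, then Sigma_W holds: the
   new operations are minors of g_(a,a'). *)
Section Extension.
Variables (V W : finType) (E : rel V) (EW : rel W) (a a' : V).
Variables (r : W -> option V) (kap : W -> 'I_6 -> 'I_3).

Definition outside_or_on_edge (w : W) : bool :=
  if r w is Some b then (b == a) || (b == a') else true.

Hypothesis kap_a : forall w, r w = Some a -> kap w = mu1.
Hypothesis kap_a' : forall w, r w = Some a' -> kap w = mu2.
Hypothesis W_edges : forall u v, EW u v ->
  (exists b b', [/\ r u = Some b, r v = Some b' & E b b']) \/
  [/\ outside_or_on_edge u, outside_or_on_edge v & forall p, kap u p != kap v p].

Lemma sigma_extend (A : Type) (C : clone A) :
  E a a' -> satSigma E C -> satSigma EW C.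
Proof.
move=> Eaa' /satSigma_funP [f [g [cf cg fg]]]; apply/satSigma_funP.
pose G0 := g a a'; have cG0 : cmem C 6 G0 := cg a a' Eaa'.
pose F w := if r w is Some b then f b else fun xs => G0 (fun p => xs (kap w p)).
pose Gnew u v := fun xs => G0 (fun p => xs (pos (kap u p) (kap v p))).
pose G u v := match r u, r v with
  | Some b, Some b' => if E b b' then g b b' else Gnew u v
  | _, _ => Gnew u v end.
have F_minor w xs : outside_or_on_edge w -> F w xs = G0 (fun p => xs (kap w p)).
  rewrite /outside_or_on_edge /F; case rw: (r w) => [b|] // /orP[] /eqP eb.
    by rewrite (kap_a (etrans rw (congr1 Some eb))) eb; case: (fg a a' Eaa' xs).
  by rewrite (kap_a' (etrans rw (congr1 Some eb))) eb; case: (fg a a' Eaa' xs).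
have Gnew_ok u v xs : (forall p, kap u p != kap v p) ->
    G0 (fun p => xs (kap u p)) = Gnew u v (fun p => xs (mu1 p)) /\
    G0 (fun p => xs (kap v p)) = Gnew u v (fun p => xs (mu2 p)).
  move=> neq; split; congr G0; apply: functional_extensionality => p;
    by have [e1 e2] := mu_pos (neq p); rewrite ?e1 ?e2.
exists F, G; split=> [w|u v _|u v Euv xs].
- by rewrite /F; case: (r w) => [b|]; [exact: cf|exact: cmem_minor cG0].
- rewrite /G; case: (r u) => [b|]; last exact: cmem_minor cG0.
  case: (r v) => [b'|]; last exact: cmem_minor cG0.
  by case: ifP => [/cg|_] //; exact: cmem_minor cG0.
have [[b [b' [ru rv Ebb']]]|[ou ov neq]] := W_edges Euv.
  by rewrite /F /G ru rv Ebb'; exact: fg.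
rewrite !F_minor //; have [e1 e2] := Gnew_ok u v xs neq.
rewrite /G; case ru: (r u) => [b|] //; case rv: (r v) => [b'|] //.
case: ifP => // Ebb'; move: (fg b b' Ebb' xs).
by rewrite -!F_minor // /F ru rv.
Qed.

End Extension.

Lemma hom_add_edge (V : finType) (E : rel V) (a b : V) (c : V -> 'I_3) :
  is_hom (remove_edge E a b) K3 c -> c a != c b -> is_hom E K3 c.
Proof.
move=> hc ne u v Euv.
case uv: ((u == a) && (v == b) || (u == b) && (v == a)).
  by case/orP: uv => /andP[/eqP -> /eqP ->]; rewrite /K3 // eq_sym.
by apply: hc; rewrite /remove_edge Euv uv.
Qed.

Lemma uncolorable_remove_edge (V : finType) (E : rel V) (a b : V)
  (c : V -> 'I_3) :
  ~ colorable3 E -> is_hom (remove_edge E a b) K3 c -> c a = c b.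
Proof.
move=> ncol hc; apply/eqP; case: eqP => // /eqP ne.
by case: ncol; exists c; exact: hom_add_edge ne.
Qed.

Section Amalgam.
Variables (VG VH VN : finType) (EG : rel VG) (EH : rel VH) (EN : rel VN).
Variables (g g' : VG) (h h' : VH) (x x' y y' : VN).

Local Notation W := (Wvert VG VH x x' y y').
Local Notation EW := (Wadj EG EH EN g g' h h' x x' y y').
Local Notation jG := (iG VH x x' y y').
Local Notation jH := (iH VG x x' y y').
Local Notation jN := (iN g g' h h' x x' y y').

Lemma Wadj_cases (u v : W) : EW u v ->
  [\/ exists a b, [/\ remove_edge EG g g' a b, u = jG a & v = jG b],
      exists a b, [/\ remove_edge EH h h' a b, u = jH a & v = jH b] |
      exists a b, [/\ EN a b, u = jN a & v = jN b]].
Proof.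
by case/or3P => /existsP [a /existsP [b /and3P [e /eqP <- /eqP <-]]];
  [apply: Or31|apply: Or32|apply: Or33]; exists a, b.
Qed.

Lemma Wadj_G (a b : VG) : remove_edge EG g g' a b -> EW (jG a) (jG b).
Proof.
by move=> e; apply/or3P/Or31/existsP; exists a; apply/existsP; exists b;
  rewrite e !eqxx.
Qed.

Lemma Wadj_H (a b : VH) : remove_edge EH h h' a b -> EW (jH a) (jH b).
Proof.
by move=> e; apply/or3P/Or32/existsP; exists a; apply/existsP; exists b;
  rewrite e !eqxx.
Qed.

Lemma Wadj_N (a b : VN) : EN a b -> EW (jN a) (jN b).
Proof.
by move=> e; apply/or3P/Or33/existsP; exists a; apply/existsP; exists b;
  rewrite e !eqxx.
Qed.

Lemma iN_glued : uniq [:: x; x'; y; y'] ->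
  [/\ jN x = jG g, jN x' = jG g', jN y = jH h & jN y' = jH h'].
Proof.
rewrite /= !inE !negb_or => /and4P [/and3P [n1 n2 n3] /andP [n4 n5] n6 _].
rewrite /iN !insubN ?inE ?eqxx ?orbT //.
by rewrite ![x' == _]eq_sym ![y == _]eq_sym ![y' == _]eq_sym
  (negbTE n1) (negbTE n2) (negbTE n3) (negbTE n4) (negbTE n5) (negbTE n6).
Qed.

Lemma iN_in_G (v : VN) (b : VG) : jN v = jG b -> (b == g) || (b == g').
Proof.
rewrite /iN; case: insubP => [//|_].
case: ifP => _; first by case=> <-; rewrite eqxx.
case: ifP => _; first by case=> <-; rewrite eqxx orbT.
by case: ifP.
Qed.

Definition glue (T : Type) (cG : VG -> T) (cH : VH -> T) (cN : VN -> T)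
  (w : W) : T :=
  match w with
  | inl (inl u) => cG u
  | inl (inr u) => cH u
  | inr s => cN (val s)
  end.

Lemma glue_iN (T : Type) (cG : VG -> T) (cH : VH -> T) (cN : VN -> T) :
  cG g = cN x -> cG g' = cN x' -> cH h = cN y -> cH h' = cN y' ->
  forall v, glue cG cH cN (jN v) = cN v.
Proof.
move=> ex ex' ey ey' v; rewrite /iN; case: insubP => [s _ <- //|].
by rewrite !inE; do 4!case: eqP => [-> //|_].
Qed.

(* (1): by (N1), a coloring of W would separate g, g' or h, h', and would
   thus color G or H. *)
Lemma W_not_colorable :
  uniq [:: x; x'; y; y'] -> ~ colorable3 EG -> ~ colorable3 EH ->
  (forall c : VN -> 'I_3, is_hom EN K3 c -> (c x != c x') (+) (c y != c y')) ->
  ~ colorable3 EW.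
Proof.
move=> distinct ncolG ncolH N1 [c hc].
have [ex ex' ey ey'] := iN_glued distinct.
have hcN : is_hom EN K3 (fun v => c (jN v)) by move=> a b /Wadj_N /hc.
have hcG : is_hom (remove_edge EG g g') K3 (fun u => c (jG u)).
  by move=> a b /Wadj_G /hc.
have hcH : is_hom (remove_edge EH h h') K3 (fun u => c (jH u)).
  by move=> a b /Wadj_H /hc.
move: (N1 _ hcN); rewrite ex ex' ey ey'.
by rewrite (uncolorable_remove_edge ncolG hcG) (uncolorable_remove_edge ncolH hcH) !eqxx.
Qed.

Lemma W_critical (d1 d2 : VN)
  (cG : VG -> 'I_3) (cH : VH -> 'I_3) (cN : VN -> 'I_3) :
  EN d1 d2 ->
  is_hom (remove_edge EG g g') K3 cG -> is_hom (remove_edge EH h h') K3 cH ->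
  is_hom (remove_edge EN d1 d2) K3 cN ->
  cG g = cN x -> cG g' = cN x' -> cH h = cN y -> cH h' = cN y' ->
  critical_edge EW (jN d1) (jN d2).
Proof.
move=> ed hG hH hN ex ex' ey ey'; split; first exact: Wadj_N.
exists (glue cG cH cN) => u v /andP [/Wadj_cases [] [a [b [eab -> ->]]] not_d];
  [exact: hG|exact: hH|].
rewrite !glue_iN //; apply: hN; rewrite /remove_edge eab; apply: contra not_d.
by case/orP => /andP [/eqP -> /eqP ->]; rewrite !eqxx ?orbT.
Qed.

(* (3), G-side: G - e keeps the solution of Sigma_G; H - f is sent to the
   constant maps of a coloring of H - f that identifies h and h', and each
   vertex v of N to the map p |-> s p v, where s p is a coloring of N with
   (s p x, s p x') = (mu1 p, mu2 p) and s p constant on {y, y'}. *)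
Lemma sigma_W_of_G (cH : VH -> 'I_3) :
  uniq [:: x; x'; y; y'] -> EG g g' -> g != g' ->
  is_hom (remove_edge EH h h') K3 cH -> cH h = cH h' ->
  (forall a a' : 'I_3, a != a' -> exists c : VN -> 'I_3,
     [/\ is_hom EN K3 c, c x = a, c x' = a', c y = cH h & c y' = cH h]) ->
  h1_implies (fun A C => satSigma EG C) (fun A C => satSigma EW C).
Proof.
move=> distinct eG ngg hH eqH N2 A C sG.
have [s hs] : exists s : 'I_6 -> VN -> 'I_3, forall p,
    [/\ is_hom EN K3 (s p), s p x = mu1 p, s p x' = mu2 p,
        s p y = cH h & s p y' = cH h].
  exact: functional_choice (fun p => N2 _ _ (mu_neq p)).
pose r (w : W) := if w is inl (inl b) then Some b else None.
pose kG (b : VG) := if b == g then mu1 else mu2.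
pose kap := glue kG (fun u _ => cH u) (fun v p => s p v).
have kap_N v : kap (jN v) = (fun p => s p v).
  apply: glue_iN; rewrite /kG ?eqxx 1?eq_sym ?(negbTE ngg) -?eqH;
    apply: functional_extensionality => p;
    by case: (hs p) => _ e1 e2 e3 e4; rewrite ?e1 ?e2 ?e3 ?e4.
have out_N v : outside_or_on_edge g g' r (jN v).
  by rewrite /outside_or_on_edge; case jv: (jN v) => [[b|b]|] //; exact: iN_in_G jv.
apply: (sigma_extend (r := r) (kap := kap) _ _ _ eG sG).
- by case=> [[b|b]|s0] //= [->]; rewrite /kG eqxx.
- by case=> [[b|b]|s0] //= [->]; rewrite /kG eq_sym (negbTE ngg).
move=> u v /Wadj_cases [] [a [b [e -> ->]]].
- by left; exists a, b; split=> //; case/andP: e.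
- by right; split=> // p; exact: hH.
right; split=> // p; rewrite !kap_N.
by case: (hs p) => /(_ _ _ e).
Qed.

End Amalgam.

Lemma uniq_swap (T : eqType) (x x' y y' : T) :
  uniq [:: x; x'; y; y'] -> uniq [:: y; y'; x; x'].
Proof. by rewrite -[[:: y; _; _; _]]/([:: y; y'] ++ [:: x; x']) uniq_catC. Qed.

(* Exchanging the roles of (G, x, x') and (H, y, y') maps W onto the amalgam
   built in the other order; this is the symmetry reducing the H-side of (3)
   to the G-side. *)
Lemma Wswap_hom (VG VH VN : finType) (EG : rel VG) (EH : rel VH) (EN : rel VN)
  (g g' : VG) (h h' : VH) (x x' y y' : VN) :
  uniq [:: x; x'; y; y'] ->
  is_hom (Wadj EG EH EN g g' h h' x x' y y') (Wadj EH EG EN h h' g g' y y' x x')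
    (glue (iH VH y y' x x') (iG VG y y' x x') (iN h h' g g' y y' x x')).
Proof.
move=> /uniq_swap distinct'.
have [ex ex' ey ey'] := iN_glued h h' g g' distinct'.
move=> u v /Wadj_cases [] [a [b [e -> ->]]] /=.
- exact: Wadj_H.
- exact: Wadj_G.
by rewrite !glue_iN //; exact: Wadj_N.
Qed.

Theorem lemmaA1
  (VG : finType) (EG : rel VG) (g g' : VG)
  (VH : finType) (EH : rel VH) (h h' : VH)
  (VN : finType) (EN : rel VN) (x x' y y' d1 d2 : VN)
  (* G: finite loopless graph, not 3-colorable, {g,g'} critical *)
  (symG : symmetric EG) (irrG : irreflexive EG)
  (ncolG : ~ colorable3 EG) (critG : critical_edge EG g g')
  (* H: finite loopless graph, not 3-colorable, {h,h'} critical *)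
  (symH : symmetric EH) (irrH : irreflexive EH)
  (ncolH : ~ colorable3 EH) (critH : critical_edge EH h h')
  (* N: finite loopless graph *)
  (symN : symmetric EN) (irrN : irreflexive EN)
  (distinct : uniq [:: x; x'; y; y'])
  (nexx : ~~ EN x x') (neyy : ~~ EN y y')
  (edge_d : EN d1 d2)
  (N1 : forall c : VN -> 'I_3, is_hom EN K3 c ->
          (c x != c x') (+) (c y != c y'))
  (N2 : forall a a' b b' : 'I_3, (a != a') (+) (b != b') ->
          exists c : VN -> 'I_3, [/\ is_hom EN K3 c,
            c x = a, c x' = a', c y = b & c y' = b'])
  (N3 : forall a b : 'I_3,
          exists c : VN -> 'I_3, [/\ is_hom (remove_edge EN d1 d2) K3 c,
            c x = a, c x' = a, c y = b & c y' = b]) :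
  let EW := Wadj EG EH EN g g' h h' x x' y y' in
  let dW1 := iN g g' h h' x x' y y' d1 in
  let dW2 := iN g g' h h' x x' y y' d2 in
  [/\ ~ colorable3 EW,
      critical_edge EW dW1 dW2,
      h1_implies (fun A C => satSigma EG C) (fun A C => satSigma EW C)
    & h1_implies (fun A C => satSigma EH C) (fun A C => satSigma EW C)].
Proof.
move=> EW dW1 dW2.
have [eG [cG hG]] := critG; have [eH [cH hH]] := critH.
have eqG : cG g = cG g' := uncolorable_remove_edge ncolG hG.
have eqH : cH h = cH h' := uncolorable_remove_edge ncolH hH.
have ngg : g != g' by apply: contraTneq eG => <-; rewrite irrG.
have nhh : h != h' by apply: contraTneq eH => <-; rewrite irrH.
have [cN [hN ex ex' ey ey']] := N3 (cG g) (cH h).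
split.
- exact: W_not_colorable.
- by apply: (W_critical edge_d hG hH hN); rewrite -?eqG -?eqH.
- apply: sigma_W_of_G hH eqH _ => // a a' neq.
  by apply: N2; rewrite eqxx addbF.
have N2_swap a a' : a != a' -> exists c : VN -> 'I_3,
    [/\ is_hom EN K3 c, c y = a, c y' = a', c x = cG g & c x' = cG g].
  move=> neq; have := N2 (cG g) (cG g) a a'; rewrite eqxx => /(_ neq).
  by case=> c [hc cx cx' cy cy']; exists c.
move=> A C /(sigma_W_of_G (uniq_swap distinct) eH nhh hG eqG N2_swap).
exact: sigma_hom (Wswap_hom distinct).
Qed.
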